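(* A regular monoid with finitely many left ideals and finitely many right ideals is residually finite if and only if all its maximal subgroups are residually finite.
   Context: A monoid $M$ is regular if for each $x$ there is $y$ with $xyx=x$. A maximal subgroup is a maximal subgroup of $M$ (an $\mathcal{H}$-class containing an idempotent, where $\mathcal{H}=\mathcal{R}\cap\mathcal{L}$). Residual finiteness: distinct elements are separated by homomorphisms to finite monoids (groups). *)

From Stdlib Require List.
From mathcomp Require Import all_boot all_fingroup.
Set Implicit Arguments. Unset Strict Implicit. Unset Printing Implicit Defensive.

Definition is_monoid (M : Type) (mul : M -> M -> M) (one : M) : Prop :=
  (forall x y z, mul x (mul y z) = mul (mul x y) z) /\
  (forall x, mul one x = x) /\ (forall x, mul x one = x).

Definition regular (M : Type) (mul : M -> M -> M) : Prop :=
  forall x, exists y, mul (mul x y) x = x.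

Definition left_ideal (M : Type) (mul : M -> M -> M) (I : M -> Prop) : Prop :=
  forall m x, I x -> I (mul m x).
Definition right_ideal (M : Type) (mul : M -> M -> M) (I : M -> Prop) : Prop :=
  forall m x, I x -> I (mul x m).

Definition finitely_many (M : Type) (P : (M -> Prop) -> Prop) : Prop :=
  exists s : seq (M -> Prop),
    forall I, P I -> exists2 J, List.In J s & forall x, I x <-> J x.

Definition monoid_hom (M N : Type) (mulM : M -> M -> M) (oneM : M)
  (mulN : N -> N -> N) (oneN : N) (f : M -> N) : Prop :=
  (forall x y, f (mulM x y) = mulN (f x) (f y)) /\ f oneM = oneN.

Definition residually_finite_monoid (M : Type) (mul : M -> M -> M) (one : M) : Prop :=
  forall x y, x <> y ->
    exists (N : finType) (mulN : N -> N -> N) (oneN : N) (f : M -> N),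
      is_monoid mulN oneN /\ monoid_hom mul one mulN oneN f /\ f x <> f y.

Definition greenR (M : Type) (mul : M -> M -> M) (x y : M) : Prop :=
  exists a b, x = mul y a /\ y = mul x b.
Definition greenL (M : Type) (mul : M -> M -> M) (x y : M) : Prop :=
  exists a b, x = mul a y /\ y = mul b x.
Definition greenH (M : Type) (mul : M -> M -> M) (x y : M) : Prop :=
  greenR mul x y /\ greenL mul x y.

Definition is_idempotent (M : Type) (mul : M -> M -> M) (e : M) : Prop := mul e e = e.

(* The maximal subgroup at an idempotent e is its H-class H_e (a group with
   identity e under the restricted multiplication). *)
Definition residually_finite_maximal_subgroup (M : Type) (mul : M -> M -> M)
  (e : M) : Prop :=
  forall x y, greenH mul x e -> greenH mul y e -> x <> y ->
    exists (G : finGroupType) (f : M -> G),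
      (forall u v, greenH mul u e -> greenH mul v e ->
         f (mul u v) = (f u * f v)%g) /\ f x <> f y.

From Stdlib Require List.
From mathcomp Require Import all_boot all_fingroup boolp.
Set Implicit Arguments. Unset Strict Implicit. Unset Printing Implicit Defensive.

(* If M is residually finite, a finite quotient f : M -> N sends H_e into
   the group H-class of f e, and the right translations of N restricted to
   the fixed points of f e turn this into a permutation representation of
   H_e that separates its points.
   Conversely, two elements that are not L-related are separated by the right
   action of M on its finitely many L-classes, and dually for R.  Two
   elements x, y that are both L- and R-related lie in the R-class R_e of an
   idempotent e (by regularity), and are separated by the Schutzenberger
   representation of M on G x (L-classes of R_e), where G is a finite group
   image of H_e separating the H_e-components of r0 x and r0 y, r0 being the
   representative of the L-class of e. *)

Definition separated (M : Type) (mul : M -> M -> M) (one : M) (x y : M) : Prop :=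
  exists (N : finType) (mulN : N -> N -> N) (oneN : N) (f : M -> N),
    is_monoid mulN oneN /\ monoid_hom mul one mulN oneN f /\ f x <> f y.

Section Separation.
Variables (M : Type) (mul : M -> M -> M) (one : M).
Local Notation "a ** b" := (mul a b) (at level 40, left associativity).

Lemma separated_by_action (X : finType) (act : X -> M -> X) x y p :
  (forall p, act p one = p) -> (forall p s t, act (act p s) t = act p (s ** t)) ->
  act p x <> act p y -> separated mul one x y.
Proof.
move=> act1 actM pxy.
exists {ffun X -> X}, (fun a b : {ffun X -> X} => [ffun q => b (a q)]), [ffun q => q],
  (fun s => [ffun q => act q s]).
split; [split; [|split]|split; [split|]] => [a b c|a|a|a b||].
- by apply/ffunP => q; rewrite !ffunE.
- by apply/ffunP => q; rewrite !ffunE.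
- by apply/ffunP => q; rewrite !ffunE.
- by apply/ffunP => q; rewrite !ffunE actM.
- by apply/ffunP => q; rewrite !ffunE act1.
- by move/(congr1 (fun F : {ffun X -> X} => F p)); rewrite !ffunE.
Qed.

Lemma separated_by_right_congruence (X : finType) (cls : M -> X) x y :
  is_monoid mul one -> (forall a b t, cls a = cls b -> cls (a ** t) = cls (b ** t)) ->
  cls x <> cls y -> separated mul one x y.
Proof.
move=> [mulA [mul1m mulm1]] clsM xy.
pose rep k (H : exists z, cls z = k) := sval (cid H).
have repP k H : cls (@rep k H) = k := svalP (cid H).
pose act k t := if pselect (exists z, cls z = k) is left H then cls (rep k H ** t) else k.
have act_cls z t : act (cls z) t = cls (z ** t).
  rewrite /act; case: pselect => [H|[]]; last by exists z.
  exact/clsM/repP.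
have act_out k t : ~ (exists z, cls z = k) -> act k t = k.
  by rewrite /act; case: pselect.
apply: (@separated_by_action X act x y (cls one)) => [k|k s t|].
- by case: (pselect (exists z, cls z = k)) => [[z <-]|/act_out->]; rewrite ?act_cls ?mulm1.
- case: (pselect (exists z, cls z = k)) => [[z <-]|/act_out E]; last by rewrite !E.
  by rewrite !act_cls mulA.
- by rewrite !act_cls !mul1m.
Qed.

End Separation.

Lemma is_monoid_opposite (M : Type) (mul : M -> M -> M) (one : M) :
  is_monoid mul one -> is_monoid (fun a b => mul b a) one.
Proof. by move=> [mulA [mul1m mulm1]]; do ![split] => // a b c; rewrite mulA. Qed.

Lemma separated_opposite (M : Type) (mul : M -> M -> M) (one : M) x y :
  separated (fun a b => mul b a) one x y -> separated mul one x y.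
Proof.
move=> [N [mulN [oneN [f [[mulNA [mul1N mulN1]] [[fM f1] fxy]]]]]].
exists N, (fun a b => mulN b a), oneN, f.
by do ![split] => //= [a b c|a b]; rewrite ?mulNA ?fM.
Qed.

Section Green.
Variables (M : Type) (mul : M -> M -> M).
Local Notation "a ** b" := (mul a b) (at level 40, left associativity).
Hypothesis mulA : associative mul.

Lemma greenR_trans x y z : greenR mul x y -> greenR mul y z -> greenR mul x z.
Proof.
move=> [a [b [Ex Ey]]] [c [d [Ey' Ez]]].
by exists (c ** a), (b ** d); split; [rewrite {1}Ex Ey' | rewrite {1}Ez Ey]; rewrite mulA.
Qed.

Lemma greenR_sym x y : greenR mul x y -> greenR mul y x.
Proof. by move=> [a [b [Ex Ey]]]; exists b, a. Qed.

Lemma greenL_mulr x y t : greenL mul x y -> greenL mul (x ** t) (y ** t).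
Proof. by move=> [a [b [Ex Ey]]]; exists a, b; rewrite !mulA -Ex -Ey. Qed.

Variable e : M.
Hypothesis He : e ** e = e.

Lemma greenR_idem_mull r : greenR mul r e -> e ** r = r.
Proof. by move=> [a [b [-> _]]]; rewrite mulA He. Qed.

Lemma greenL_idem_mulr r : greenL mul r e -> r ** e = r.
Proof. by move=> [a [b [-> _]]]; rewrite -mulA He. Qed.

Lemma greenH_idem : greenH mul e e.
Proof. by split; exists e, e; rewrite He. Qed.

Lemma greenH_mul u v : greenH mul u e -> greenH mul v e -> greenH mul (u ** v) e.
Proof.
move=> [Ru Lu] [Rv Lv].
have [_ [b [_ Eb]]] := Ru; have [_ [b' [_ Eb']]] := Rv.
have [_ [d [_ Ed]]] := Lu; have [_ [d' [_ Ed']]] := Lv.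
split.
- exists (u ** v), (b' ** b); split; first by rewrite mulA greenR_idem_mull.
  by rewrite -mulA (mulA v) -Eb' mulA (greenL_idem_mulr Lu).
- exists (u ** v), (d' ** d); split; first by rewrite -mulA greenL_idem_mulr.
  by rewrite -mulA (mulA d) -Ed (greenR_idem_mull Rv).
Qed.

End Green.

Lemma In_nth_seq (T : Type) (s : seq T) (J x0 : T) :
  List.In J s -> exists2 k, k < size s & nth x0 s k = J.
Proof.
elim: s => //= a s IH [-> | /IH [k lt_k Ek]]; first by exists 0.
by exists k.+1.
Qed.

Lemma classifier_of_finite_cover (M : Type) (F : M -> M -> Prop) (s : seq (M -> Prop)) :
  (forall z, exists2 J, List.In J s & forall w, F z w <-> J w) ->
  exists (X : finType) (cls : M -> X),
    forall a b, cls a = cls b <-> (forall w, F a w <-> F b w).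
Proof.
move=> cover.
pose P z (k : 'I_(size s)) := `[< forall w, nth (fun _ => False) s k w <-> F z w >].
have pick_index z : exists k, [pick k | P z k] = Some k /\
    forall w, nth (fun _ => False) s k w <-> F z w.
  case: pickP => [k /asboolP Pk|none]; first by exists k.
  have [J /(In_nth_seq (fun _ => False)) [k lt_k Ek] EJ] := cover z.
  suff: P z (Ordinal lt_k) by rewrite none.
  by apply/asboolP => w /=; rewrite Ek; apply: iff_sym.
exists (option 'I_(size s)), (fun z => [pick k | P z k]) => a b; split.
- have [k [Pa Ek]] := pick_index a; have [k' [Pb Ek']] := pick_index b.
  by rewrite /= Pa Pb => -[kk'] w; rewrite -Ek kk' Ek'.
- move=> Eab; apply: eq_pick => k; apply: asbool_equiv_eq.
  by split=> E w; rewrite E Eab.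
Qed.

Section LeftIdeals.
Variables (M : Type) (mul : M -> M -> M) (one : M).
Local Notation "a ** b" := (mul a b) (at level 40, left associativity).
Hypothesis Hmon : is_monoid mul one.

Definition lprincipal (z w : M) : Prop := exists m, w = m ** z.

Lemma lprincipal_left_ideal z : left_ideal mul (lprincipal z).
Proof. by move=> m w [m' ->]; exists (m ** m'); rewrite (proj1 Hmon). Qed.

Lemma greenL_lprincipal a b :
  greenL mul a b <-> forall w, lprincipal a w <-> lprincipal b w.
Proof.
have [mulA [mul1m _]] := Hmon.
split=> [[c [d [Ea Eb]]] w | E].
- by split=> -[m ->]; [exists (m ** c); rewrite Ea | exists (m ** d); rewrite Eb]; rewrite mulA.
- have [c Ea] : lprincipal b a by apply/E; exists one; rewrite mul1m.
  have [d Eb] : lprincipal a b by apply/E; exists one; rewrite mul1m.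
  by exists c, d.
Qed.

Lemma greenL_classifier : finitely_many (left_ideal mul) ->
  exists (X : finType) (cls : M -> X), forall a b, cls a = cls b <-> greenL mul a b.
Proof.
move=> [s Hs].
have [X [cls clsP]] := @classifier_of_finite_cover M lprincipal s
  (fun z => Hs _ (@lprincipal_left_ideal z)).
by exists X, cls => a b; rewrite clsP greenL_lprincipal.
Qed.

Lemma separated_of_not_greenL x y : finitely_many (left_ideal mul) ->
  ~ greenL mul x y -> separated mul one x y.
Proof.
move=> /greenL_classifier [X [cls clsP]] NLxy.
apply: (separated_by_right_congruence (cls := cls)) => // [a b t|].
- by move/clsP/(greenL_mulr (proj1 Hmon) t)/clsP.
- by move/clsP.
Qed.

End LeftIdeals.

Section MaximalSubgroupsOfResiduallyFinite.
Variables (M : Type) (mul : M -> M -> M) (e : M).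
Local Notation "a ** b" := (mul a b) (at level 40, left associativity).
Hypothesis mulA : associative mul.
Hypothesis He : e ** e = e.
Variables (N : finType) (mulN : N -> N -> N) (f : M -> N).
Hypothesis mulNA : associative mulN.
Hypothesis fM : {morph f : a b / a ** b >-> mulN a b}.

Definition idem_transl (w : M) (n : N) : N :=
  if mulN n (f e) == n then mulN n (f w) else n.

Lemma idem_transl_inj w : greenH mul w e -> injective (idem_transl w).
Proof.
move=> [[_ [d [_ Ed]]] Lw] n m; rewrite /idem_transl.
have fixed k : mulN (mulN k (f w)) (f e) = mulN k (f w).
  by rewrite -mulNA -fM (greenL_idem_mulr mulA He Lw).
case: eqP => Hn; case: eqP => Hm //.
- by move/(congr1 (mulN^~ (f d))); rewrite -!mulNA -fM -Ed Hn Hm.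
- by move=> E; case: Hm; rewrite -E fixed.
- by move=> E; case: Hn; rewrite E fixed.
Qed.

Definition transl_perm (w : M) : {perm N} :=
  if pselect (injective (idem_transl w)) is left inj then perm inj else 1%g.

Lemma transl_permE w : greenH mul w e -> transl_perm w =1 idem_transl w.
Proof.
move/idem_transl_inj => inj n.
by rewrite /transl_perm; case: pselect => // inj'; rewrite permE.
Qed.

Lemma transl_permM u v : greenH mul u e -> greenH mul v e ->
  transl_perm (u ** v) = (transl_perm u * transl_perm v)%g.
Proof.
move=> Hu Hv; have Huv := greenH_mul mulA He Hu Hv.
apply/permP => n; rewrite permM !transl_permE // /idem_transl.
case: eqP => [_|/eqP/negbTE -> //].
by rewrite -mulNA -fM (greenL_idem_mulr mulA He Hu.2) eqxx fM mulNA.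
Qed.

Lemma transl_perm_idem u : greenH mul u e -> transl_perm u (f e) = f u.
Proof.
move=> Hu; rewrite transl_permE // /idem_transl -fM He eqxx -fM.
by rewrite (greenR_idem_mull mulA He Hu.1).
Qed.

End MaximalSubgroupsOfResiduallyFinite.

Lemma maximal_subgroup_rf_of_rf (M : Type) (mul : M -> M -> M) (one : M) :
  is_monoid mul one -> residually_finite_monoid mul one ->
  forall e, is_idempotent mul e -> residually_finite_maximal_subgroup mul e.
Proof.
move=> [mulA _] rfM e He x y Hx Hy xy.
have [N [mulN [_ [f [[mulNA _] [[fM _] fxy]]]]]] := rfM x y xy.
eexists; exists (transl_perm e mulN f).
split=> [u v Hu Hv|]; first exact: transl_permM.
by move/(congr1 (fun s : {perm N} => s (f e))); rewrite !(transl_perm_idem mulA He mulNA fM).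
Qed.

Section Schutzenberger.
Variables (M : Type) (mul : M -> M -> M) (one : M).
Local Notation "a ** b" := (mul a b) (at level 40, left associativity).
Hypothesis Hmon : is_monoid mul one.
Variables (X : finType) (cls : M -> X).
Hypothesis clsP : forall a b, cls a = cls b <-> greenL mul a b.
Variable e : M.
Hypothesis He : e ** e = e.

Let mulA : associative mul := proj1 Hmon.
Let mulm1 : right_id one mul := proj2 (proj2 Hmon).
Let idem_mull := greenR_idem_mull mulA He.
Let idem_mulr := greenL_idem_mulr mulA He.

Lemma greenR_mull_greenH h r : greenH mul h e -> e ** r = r ->
  greenR mul r e <-> greenR mul (h ** r) e.
Proof.
move=> [Rh Lh] Er; have [_ [d [_ Ed]]] := Rh; have [_ [b [_ Eb]]] := Lh.
split=> [[_ [c [_ Ec]]] | [_ [c [_ Ec]]]].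
- exists (h ** r), (c ** d); split; first by rewrite mulA idem_mull.
  by rewrite mulA -(mulA h) -Ec idem_mulr.
- exists r, (c ** h); split=> //.
  have rc : r ** c = b ** e by rewrite -{1}Er {1}Eb -!mulA (mulA h) -Ec.
  by rewrite mulA rc -mulA (idem_mull Rh) -Eb.
Qed.

Lemma greenL_mull_greenH h r : greenH mul h e -> e ** r = r -> greenL mul (h ** r) r.
Proof.
move=> [_ [_ [b [_ Eb]]]] Er.
by exists h, b; split=> //; rewrite mulA -Eb Er.
Qed.

Lemma greenR_of_mulr r t : e ** r = r -> greenR mul (r ** t) e -> greenR mul r e.
Proof. by move=> Er [_ [c [_ Ec]]]; exists r, (t ** c); rewrite mulA. Qed.

Lemma greenH_transversal r r' b : greenR mul r e -> greenL mul r r' ->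
  e ** r' = r' -> e = r' ** b -> greenH mul (r ** b) e /\ (r ** b) ** r' = r.
Proof.
move=> Rr [c [d [Ec Ed]]] Er' Eb.
have Erb : (r ** b) ** r' = r by rewrite {1}Ec -!mulA (mulA r') -Eb Er' -Ec.
have [_ [a [_ Ea]]] := Rr.
split=> //; split.
- exists (r ** b), (r' ** a); split; first by rewrite mulA idem_mull.
  by rewrite mulA Erb.
- by exists c, d; split; [rewrite {1}Ec -mulA -Eb | rewrite mulA -Ed].
Qed.

Definition meetsR (k : X) : Prop := exists r, greenR mul r e /\ cls r = k.

Definition rep (k : X) : M := if pselect (meetsR k) is left H then sval (cid H) else e.

Lemma repP k : meetsR k -> greenR mul (rep k) e /\ cls (rep k) = k.
Proof. by rewrite /rep; case: pselect => // H _; exact: (svalP (cid H)). Qed.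

Definition rinv (r : M) : M :=
  if pselect (exists b, e = r ** b) is left H then sval (cid H) else e.

Lemma rinvP r : greenR mul r e -> e = r ** rinv r.
Proof.
move=> [_ [b [_ Eb]]]; rewrite /rinv.
by case: pselect => [H|[]]; [exact: (svalP (cid H)) | exists b].
Qed.

Definition hpart (r : M) : M := r ** rinv (rep (cls r)).

Lemma hpartP r : greenR mul r e -> greenH mul (hpart r) e /\ hpart r ** rep (cls r) = r.
Proof.
move=> Rr; have [Rr' clsr'] : greenR mul (rep (cls r)) e /\ cls (rep (cls r)) = cls r.
  by apply: repP; exists r.
apply: greenH_transversal => //; last exact: rinvP.
- by apply/clsP.
- exact: idem_mull.
Qed.

Section Action.
Variables (G : finGroupType) (phi : M -> G).
Hypothesis phiM : forall u v, greenH mul u e -> greenH mul v e ->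
  phi (u ** v) = (phi u * phi v)%g.

Lemma phi_idem : phi e = 1%g.
Proof.
have := phiM (greenH_idem He) (greenH_idem He); rewrite He => E.
by apply: (mulgI (phi e)); rewrite -E mulg1.
Qed.

(* The Schutzenberger representation of [M] on [G] times the L-classes of
   [R_e], twisted by [phi]; [None] absorbs the points leaving [R_e], and the
   L-classes outside [R_e] are fixed. *)
Definition schutz_act (p : option (G * X)) (t : M) : option (G * X) :=
  if p is Some (g, k) then
    if `[< meetsR k >] then
      if `[< greenR mul (rep k ** t) e >] then
        Some ((g * phi (hpart (rep k ** t)))%g, cls (rep k ** t))
      else None
    else p
  else None.

Lemma schutz_act1 p : schutz_act p one = p.
Proof.
case: p => [[g k]|] //=; case: (asboolP (meetsR k)) => // Mk.
have [Rk clsk] := repP Mk.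
rewrite mulm1 asboolT // /hpart clsk -rinvP //.
by rewrite phi_idem mulg1.
Qed.

Lemma schutz_actM p s t : schutz_act (schutz_act p s) t = schutz_act p (s ** t).
Proof.
case: p => [[g k]|] //=; case: (asboolP (meetsR k)) => Mk; last first.
  by rewrite /= asboolF.
have [Rk _] := repP Mk.
case: (asboolP (greenR mul (rep k ** s) e)) => Rs; last first.
  rewrite asboolF // mulA => /(greenR_of_mulr _); apply: contra_not Rs; apply.
  by rewrite mulA idem_mull.
set r := rep k ** s; set k' := cls r.
have Mk' : meetsR k' by exists r.
have [Rk' _] := repP Mk'; have [Hr Er] := hpartP Rs.
set r' := rep k' ** t.
have Er' : e ** r' = r' by rewrite /r' mulA idem_mull.
have -> : rep k ** (s ** t) = hpart r ** r' by rewrite mulA -{1}Er /r' mulA.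
have cls_r' : cls (hpart r ** r') = cls r' by apply/clsP/greenL_mull_greenH.
rewrite /= asboolT //; have [Rr'|NRr'] := asboolP (greenR mul r' e).
- rewrite asboolT -/r'; last exact: (greenR_mull_greenH Hr Er').1.
  have -> : hpart (hpart r ** r') = hpart r ** hpart r' by rewrite {1}/hpart cls_r' -mulA.
  by rewrite cls_r' phiM ?mulgA //; exact: (hpartP Rr').1.
- by rewrite asboolF // -(greenR_mull_greenH Hr Er').
Qed.

End Action.

Lemma separated_in_H_class x y : residually_finite_maximal_subgroup mul e ->
  greenR mul x e -> greenR mul y e -> greenL mul x y -> x <> y ->
  separated mul one x y.
Proof.
move=> rfH Rx Ry Lxy xy.
have Me : meetsR (cls e) by exists e; split=> //; exists e, e; rewrite He.
set r0 := rep (cls e); have [Rr0 clsr0] := repP Me.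
have Hr0 : greenH mul r0 e by split=> //; apply/clsP.
have [_ [_ [d [_ Ed]]]] := Hr0.
have Rr0x := proj1 (greenR_mull_greenH Hr0 (idem_mull Rx)) Rx.
have Rr0y := proj1 (greenR_mull_greenH Hr0 (idem_mull Ry)) Ry.
have cls_r0 z : greenR mul z e -> cls (r0 ** z) = cls z.
  by move=> Rz; apply/clsP/greenL_mull_greenH => //; apply: idem_mull.
have cls_xy : cls (r0 ** x) = cls (r0 ** y) by rewrite !cls_r0 //; apply/clsP.
have hxy : hpart (r0 ** x) <> hpart (r0 ** y).
  move=> E; apply: xy; rewrite -(idem_mull Rx) -(idem_mull Ry) Ed -!mulA.
  by rewrite -(hpartP Rr0x).2 -(hpartP Rr0y).2 E cls_xy.
have [G [phi [phiM phixy]]] := rfH _ _ (hpartP Rr0x).1 (hpartP Rr0y).1 hxy.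
apply: (@separated_by_action _ _ _ _ (schutz_act phi) x y (Some (1%g, cls e))).
- exact: schutz_act1.
- exact: schutz_actM.
- rewrite /= asboolT // -/r0 !asboolT // => -[E _]; apply: phixy.
  by rewrite -(mul1g (phi _)) E mul1g.
Qed.

End Schutzenberger.

Theorem mainTheorem19 (M : Type) (mul : M -> M -> M) (one : M) :
  is_monoid mul one ->
  regular mul ->
  finitely_many (left_ideal mul) ->
  finitely_many (right_ideal mul) ->
  (residually_finite_monoid mul one <->
   forall e : M, is_idempotent mul e -> residually_finite_maximal_subgroup mul e).
Proof.
move=> Hmon reg finL finR; split; first exact: maximal_subgroup_rf_of_rf.
move=> rfH x y xy; have mulA := proj1 Hmon.
have [Rxy|NRxy] := pselect (greenR mul x y); last first.
  exact/separated_opposite/(separated_of_not_greenL (is_monoid_opposite Hmon)).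
have [Lxy|NLxy] := pselect (greenL mul x y); last exact: separated_of_not_greenL.
have [x' Ex] := reg x; set e := mul x x'.
have He : is_idempotent mul e by rewrite /is_idempotent /e mulA Ex.
have Rx : greenR mul x e by exists x, x'; rewrite /e Ex.
have Ry := greenR_trans mulA (greenR_sym Rxy) Rx.
have [X [cls clsP]] := greenL_classifier Hmon finL.
exact: (separated_in_H_class Hmon clsP He (rfH e He) Rx Ry Lxy xy).
Qed.
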